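(* Let $P_1,\dots,P_a$ be orthogonal projectors on a finite-dimensional Hilbert space $B$. Suppose a finite group $G$ acts transitively on the labels $\{1,\dots,a\}$, $i\mapsto i^g$, and $g\mapsto U^g$ is a unitary representation of $G$ on $B$ such that $P_{i^g}=(U^g)^\dagger P_iU^g$ for all $i$ and $g\in G$. Let $B=\bigoplus_\lambda\mathcal{Q}_\lambda\otimes\mathcal{R}_\lambda$ be the isotypical decomposition of $U$, with $\mathcal{Q}_\lambda$ pairwise inequivalent irreducible representations and $\mathcal{R}_\lambda$ the multiplicity spaces; let $L$ be the number of terms $\lambda$ and $M=\max_\lambda\dim\mathcal{R}_\lambda$. If $$\frac{a}{\left\|\sum_{i=1}^aP_i\right\|_\infty}>16L^6M^9,$$ then there exists a POVM $(R_i)_{i=1}^a$ on $B$ (i.e. $R_i\ge0$, $\sum_iR_i=\mathbb{1}$) with $P_iR_i=0$ for all $i$. In particular, any set of states $\{\rho_i\}_{i=1}^a$ with $\mathrm{supp}\,\rho_i$ contained in the range of $P_i$ can be conclusively excluded.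
   Context: A set of states $\{\rho_i\}$ is conclusively excluded by a POVM $(R_i)$ indexed by the same labels if $\mathrm{tr}\,\rho_iR_i=0$ for all $i$. $\|\cdot\|_\infty$ is the operator norm. *)

From HB Require Import structures.
From mathcomp Require Import all_boot all_order all_algebra all_fingroup.
From mathcomp Require Import mxrepresentation.
From mathcomp Require Import complex.
From mathcomp Require Import boolp classical_sets reals.
Set Implicit Arguments. Unset Strict Implicit. Unset Printing Implicit Defensive.
Import Order.TTheory GRing.Theory Num.Theory.
Local Open Scope ring_scope.

(* Hilbert space B = C^n, operators = n x n complex matrices acting on
   column vectors 'cV_n.  Conjugate transpose: *)
Definition adjmx (R : realType) m n (A : 'M[R[i]]_(m, n)) : 'M[R[i]]_(n, m) :=
  (map_mx Num.conj A)^T.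

Definition vnorm (R : realType) n (v : 'cV[R[i]]_n) : R :=
  Num.sqrt (\sum_(k < n) ((complex.Re (v k 0)) ^+ 2 + (complex.Im (v k 0)) ^+ 2)).

Definition opnorm (R : realType) n (A : 'M[R[i]]_n) : R :=
  sup [set vnorm (A *m v) | v in [set v : 'cV[R[i]]_n | vnorm v = 1]]%classic.

Definition orth_projector (R : realType) n (P : 'M[R[i]]_n) : Prop :=
  adjmx P = P /\ P *m P = P.

Definition psd (R : realType) n (A : 'M[R[i]]_n) : Prop :=
  adjmx A = A /\ forall v : 'cV[R[i]]_n, 0 <= (adjmx v *m A *m v) 0 0.

Definition unitary (R : realType) n (U : 'M[R[i]]_n) : Prop :=
  adjmx U *m U = 1%:M /\ U *m adjmx U = 1%:M.

Definition POVM (R : realType) n a (Rm : 'I_a -> 'M[R[i]]_n) : Prop :=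
  (forall i, psd (Rm i)) /\ \sum_(i < a) Rm i = 1%:M.

From HB Require Import structures.
From mathcomp Require Import all_boot all_order all_algebra all_fingroup.
From mathcomp Require Import mxrepresentation.
From mathcomp Require Import complex.
From mathcomp Require Import boolp classical_sets reals.
From mathcomp Require Import ring lra.
Set Implicit Arguments. Unset Strict Implicit. Unset Printing Implicit Defensive.
Import Order.TTheory GRing.Theory Num.Theory.
Local Open Scope complex_scope.
Local Open Scope ring_scope.

(** Fix a label i0 with stabiliser of order m (so |G| = m a), put K = 1 - P_i0 and let
    W X = \sum_g U_g^* X U_g be the twirl.  For every Y the operators
    R_i = m^-1 \sum_(g | i0^g = i) U_g^* K Y K U_g satisfy P_i R_i = 0, are positive when
    Y is, and add up to m^-1 W (K Y K); so it suffices to find Y >= 0 with W (K Y K) = m.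
    For G-invariant Y one has W (K Y K) = m (a Y - S Y - Y S + T Y), where S = \sum_i P_i and
    T Y = m^-1 W (P_i0 Y P_i0) enlarges numerical radii by at most a factor ||S||.  Hence, as
    soon as 4 ||S|| < a, Y |-> W (K Y K) is injective on invariant matrices, which by finite
    dimension yields a self-adjoint invariant solution Y; and Z = a Y - 1 satisfies
    a Z = S Z + Z S + S - T Z, which bounds its numerical radius by
    ||S|| / (a - 3 ||S||) <= 1, i.e. Y >= 0.  The hypothesis of the theorem is much
    stronger: L, M >= 1 as soon as n > 0. *)

Section Adjoint.
Variable R : realType.
Local Notation C := R[i].

Lemma adjmxE m n (A : 'M[C]_(m, n)) i j : adjmx A i j = (A j i)^*.
Proof. by rewrite /adjmx !mxE. Qed.

Lemma adjmxK m n (A : 'M[C]_(m, n)) : adjmx (adjmx A) = A.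
Proof. by apply/matrixP=> i j; rewrite !adjmxE conjCK. Qed.

Lemma adjmxM m n p (A : 'M[C]_(m, n)) (B : 'M[C]_(n, p)) :
  adjmx (A *m B) = adjmx B *m adjmx A.
Proof.
apply/matrixP=> i j; rewrite !adjmxE !mxE rmorph_sum; apply: eq_bigr => k _.
by rewrite !adjmxE rmorphM mulrC.
Qed.

Fact adjmx_is_zmod_morphism m n : zmod_morphism (@adjmx R m n).
Proof. by move=> A B; apply/matrixP=> i j; rewrite !(adjmxE, mxE) rmorphB. Qed.

HB.instance Definition _ m n :=
  GRing.isZmodMorphism.Build 'M[C]_(m, n) 'M[C]_(n, m) (@adjmx R m n)
    (@adjmx_is_zmod_morphism m n).

Lemma adjmxZ m n c (A : 'M[C]_(m, n)) : adjmx (c *: A) = c^* *: adjmx A.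
Proof. by apply/matrixP=> i j; rewrite !(adjmxE, mxE) rmorphM. Qed.

Lemma adjmx1 n : adjmx (1%:M : 'M[C]_n) = 1%:M.
Proof. by apply/matrixP=> i j; rewrite adjmxE !mxE conjC_nat eq_sym. Qed.

End Adjoint.

Lemma Re_conj (R : realType) (z : R[i]) : complex.Re z^* = complex.Re z.
Proof. by case: z. Qed.

Lemma Re_realM (R : realType) (r : R) (z : R[i]) :
  complex.Re (r%:C * z) = r * complex.Re z.
Proof. by case: z => a b /=; rewrite mul0r subr0. Qed.

Lemma conj_fixE (R : realType) (z : R[i]) : z^* = z -> z = (complex.Re z)%:C.
Proof. by case: z => a b /= -[] hb; congr (_ +i* _); lra. Qed.

Lemma natC (R : realType) k : (k%:R : R[i]) = (k%:R : R)%:C.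
Proof. by rewrite rmorph_nat. Qed.

Lemma conjC_real (R : realType) (r : R) : (r%:C : R[i])^* = r%:C.
Proof. exact: conjc_real. Qed.

Section InnerProduct.
Variable R : realType.
Local Notation C := R[i].

Definition dotv n (x y : 'cV[C]_n) : C := (adjmx x *m y) 0 0.

Lemma dotvE n (x y : 'cV[C]_n) : dotv x y = \sum_k (x k 0)^* * y k 0.
Proof. by rewrite /dotv mxE; apply: eq_bigr => k _; rewrite adjmxE. Qed.

Lemma dotvC n (x y : 'cV[C]_n) : dotv y x = (dotv x y)^*.
Proof.
rewrite !dotvE rmorph_sum; apply: eq_bigr => k _.
by rewrite rmorphM /= conjCK mulrC.
Qed.

Lemma dotv_adjmx n (A : 'M[C]_n) (x y : 'cV[C]_n) :
  dotv x (A *m y) = dotv (adjmx A *m x) y.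
Proof. by rewrite /dotv adjmxM adjmxK mulmxA. Qed.

Lemma dotvDr n (x y z : 'cV[C]_n) : dotv x (y + z) = dotv x y + dotv x z.
Proof. by rewrite /dotv mulmxDr mxE. Qed.

Lemma dotvZr n c (x y : 'cV[C]_n) : dotv x (c *: y) = c * dotv x y.
Proof. by rewrite /dotv -scalemxAr mxE. Qed.

Lemma dotvZl n c (x y : 'cV[C]_n) : dotv (c *: x) y = c^* * dotv x y.
Proof. by rewrite /dotv adjmxZ -scalemxAl mxE. Qed.

Lemma dotv_ge0 n (x : 'cV[C]_n) : 0 <= dotv x x.
Proof. by rewrite dotvE; apply: sumr_ge0 => k _; rewrite mulrC mul_conjC_ge0. Qed.

Lemma dotv_eq0 n (x : 'cV[C]_n) : (dotv x x == 0) = (x == 0).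
Proof.
apply/idP/eqP=> [|->]; last by rewrite /dotv mulmx0 mxE.
rewrite dotvE psumr_eq0 => [/allP x0|k _]; last by rewrite mulrC mul_conjC_ge0.
apply/matrixP=> k j; rewrite (ord1 j) mxE.
by apply/eqP; rewrite -mul_conjC_eq0 mulrC; apply: x0; rewrite mem_index_enum.
Qed.

Definition redot n (x y : 'cV[C]_n) : R := complex.Re (dotv x y).
Definition sqnorm n (x : 'cV[C]_n) : R := redot x x.
Definition qform n (A : 'M[C]_n) (x : 'cV[C]_n) : R := redot x (A *m x).

Lemma redotC n (x y : 'cV[C]_n) : redot x y = redot y x.
Proof. by rewrite /redot dotvC Re_conj. Qed.

Lemma redotDr n (x y z : 'cV[C]_n) : redot x (y + z) = redot x y + redot x z.
Proof. by rewrite /redot dotvDr raddfD. Qed.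

Lemma redotDl n (x y z : 'cV[C]_n) : redot (x + y) z = redot x z + redot y z.
Proof. by rewrite redotC redotDr !(redotC z). Qed.

Lemma redotZr n (t : R) (x y : 'cV[C]_n) : redot x (t%:C *: y) = t * redot x y.
Proof. by rewrite /redot dotvZr Re_realM. Qed.

Lemma redotZl n (t : R) (x y : 'cV[C]_n) : redot (t%:C *: x) y = t * redot x y.
Proof. by rewrite redotC redotZr redotC. Qed.

Lemma redotNr n (x y : 'cV[C]_n) : redot x (- y) = - redot x y.
Proof. by rewrite /redot /dotv mulmxN mxE raddfN. Qed.

Lemma redotNl n (x y : 'cV[C]_n) : redot (- x) y = - redot x y.
Proof. by rewrite redotC redotNr redotC. Qed.

Lemma redot0r n (x : 'cV[C]_n) : redot x 0 = 0.
Proof. by rewrite /redot /dotv mulmx0 mxE. Qed.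

Lemma dotv_sqnorm n (x : 'cV[C]_n) : dotv x x = (sqnorm x)%:C.
Proof. by apply/conj_fixE; rewrite -dotvC. Qed.

Lemma sqnorm_ge0 n (x : 'cV[C]_n) : 0 <= sqnorm x.
Proof. by rewrite -lecR -dotv_sqnorm dotv_ge0. Qed.

Lemma sqnorm_eq0 n (x : 'cV[C]_n) : (sqnorm x == 0) = (x == 0).
Proof. by rewrite -dotv_eq0 dotv_sqnorm fmorph_eq0. Qed.

Lemma redot0l n (y : 'cV[C]_n) : redot 0 y = 0.
Proof. by rewrite redotC redot0r. Qed.

Lemma redot_adjmx n (A : 'M[C]_n) (x y : 'cV[C]_n) :
  redot x (A *m y) = redot (adjmx A *m x) y.
Proof. by rewrite /redot dotv_adjmx. Qed.

Lemma sqnormD n (x y : 'cV[C]_n) :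
  sqnorm (x + y) = sqnorm x + sqnorm y + 2 * redot x y.
Proof. by rewrite /sqnorm redotDl !redotDr (redotC y x); ring. Qed.

Lemma sqnormN n (x : 'cV[C]_n) : sqnorm (- x) = sqnorm x.
Proof. by rewrite /sqnorm redotNl redotNr opprK. Qed.

Lemma sqnormB n (x y : 'cV[C]_n) :
  sqnorm (x - y) = sqnorm x + sqnorm y - 2 * redot x y.
Proof. by rewrite sqnormD sqnormN redotNr mulrN. Qed.

Lemma sqnormZ n (t : R) (x : 'cV[C]_n) : sqnorm (t%:C *: x) = t ^+ 2 * sqnorm x.
Proof. by rewrite /sqnorm redotZl redotZr mulrA -expr2. Qed.

Lemma redot_le n (t : R) (x y : 'cV[C]_n) : 0 < t ->
  2 * redot x y <= t * sqnorm x + t^-1 * sqnorm y.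
Proof.
move=> t0; have := sqnorm_ge0 (t%:C *: x - y).
rewrite sqnormB sqnormZ redotZl => h.
rewrite -(ler_pM2l t0) mulrDr !mulrA mulfV ?gt_eqF // mul1r; nra.
Qed.

Lemma redot_le_mul n (x y : 'cV[C]_n) (al be c : R) : 0 <= al -> 0 <= be ->
  sqnorm x <= al ^+ 2 * c -> sqnorm y <= be ^+ 2 * c ->
  `|redot x y| <= al * be * c.
Proof.
move=> al0 be0 hx hy.
have sqnorm_le0 (z : 'cV[C]_n) : sqnorm z <= 0 -> z = 0.
  by move=> hz; apply/eqP; rewrite -sqnorm_eq0 eq_le hz sqnorm_ge0.
have [al00 | alnz] := eqVneq al 0.
  move: hx; rewrite al00 expr0n mul0r => /sqnorm_le0 ->.
  by rewrite redot0l normr0 !mul0r.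
have [be00 | benz] := eqVneq be 0.
  move: hy; rewrite be00 expr0n mul0r => /sqnorm_le0 ->.
  by rewrite redot0r normr0 mulr0 mul0r.
have alp : 0 < al by rewrite lt_def alnz.
have bep : 0 < be by rewrite lt_def benz.
have tp : 0 < be / al by rewrite divr_gt0.
have h1 : be / al * sqnorm x <= be / al * (al ^+ 2 * c) by rewrite ler_pM2l.
have h2 : al / be * sqnorm y <= al / be * (be ^+ 2 * c) by rewrite ler_pM2l ?divr_gt0.
have e1 : be / al * (al ^+ 2 * c) = al * be * c by field; rewrite gt_eqF.
have e2 : al / be * (be ^+ 2 * c) = al * be * c by field; rewrite gt_eqF.
have up := redot_le x y tp; have lo := redot_le (- x) y tp.
rewrite redotNl sqnormN invf_div in up lo.
rewrite ler_norml; apply/andP; split; lra.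
Qed.

Definition selfadjoint n (A : 'M[C]_n) := adjmx A = A.

Lemma qformD n (A B : 'M[C]_n) x : qform (A + B) x = qform A x + qform B x.
Proof. by rewrite /qform mulmxDl redotDr. Qed.

Lemma qformZ n (t : R) (A : 'M[C]_n) x : qform (t%:C *: A) x = t * qform A x.
Proof. by rewrite /qform -scalemxAl redotZr. Qed.

Lemma qform_natZ n k (A : 'M[C]_n) x : qform ((k%:R : C) *: A) x = k%:R * qform A x.
Proof. by rewrite natC qformZ. Qed.

Lemma qform0 n (x : 'cV[C]_n) : qform 0 x = 0.
Proof. by rewrite /qform mul0mx redot0r. Qed.

Lemma qformN n (A : 'M[C]_n) x : qform (- A) x = - qform A x.
Proof. by rewrite /qform mulNmx redotNr. Qed.

Lemma qformB n (A B : 'M[C]_n) x : qform (A - B) x = qform A x - qform B x.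
Proof. by rewrite qformD qformN. Qed.

Lemma qform_sum n (I : finType) (P : pred I) (F : I -> 'M[C]_n) x :
  qform (\sum_(i | P i) F i) x = \sum_(i | P i) qform (F i) x.
Proof. by rewrite /qform mulmx_suml /redot /dotv mulmx_sumr summxE raddf_sum. Qed.

Lemma qform1 n (x : 'cV[C]_n) : qform 1%:M x = sqnorm x.
Proof. by rewrite /qform mul1mx. Qed.

Lemma qform_adjmx_conj n (A B : 'M[C]_n) x :
  qform (adjmx B *m A *m B) x = qform A (B *m x).
Proof. by rewrite /qform -!mulmxA redot_adjmx adjmxK. Qed.

Lemma qform_selfadjointD n (A : 'M[C]_n) x y : selfadjoint A ->
  qform A (x + y) = qform A x + qform A y + 2 * redot x (A *m y).
Proof.
move=> hA; rewrite /qform mulmxDr !redotDl !redotDr.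
by rewrite [redot y (A *m x)]redot_adjmx hA [redot (A *m y) x]redotC; ring.
Qed.

Lemma qform_oppv n (A : 'M[C]_n) x : qform A (- x) = qform A x.
Proof. by rewrite /qform mulmxN redotNl redotNr opprK. Qed.

Lemma dotv_selfadjoint n (A : 'M[C]_n) x : selfadjoint A ->
  dotv x (A *m x) = (qform A x)%:C.
Proof.
by move=> hA; apply/conj_fixE; rewrite -dotvC dotv_adjmx hA.
Qed.

End InnerProduct.

Section Bounds.
Variable R : realType.
Local Notation C := R[i].

Definition opbound n (A : 'M[C]_n) (s : R) :=
  forall v, sqnorm (A *m v) <= s ^+ 2 * sqnorm v.

Definition numrad_le n (A : 'M[C]_n) (h : R) :=
  forall v, `|qform A v| <= h * sqnorm v.

Lemma sqnorm_sum n (I : eqType) (r : seq I) (x : I -> 'cV[C]_n) :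
  sqnorm (\sum_(j <- r) x j) <= 2 ^+ size r * \sum_(j <- r) sqnorm (x j).
Proof.
elim: r => [|j r IHr]; first by rewrite !big_nil /sqnorm redot0r mul1r.
rewrite !big_cons /= sqnormD exprS.
have := redot_le (x j) (\sum_(k <- r) x k) ltr01; rewrite invr1 !mul1r.
have : 0 <= \sum_(k <- r) sqnorm (x k) by apply: sumr_ge0 => k _; apply: sqnorm_ge0.
have : 1 <= 2 ^+ size r :> R by apply: exprn_ege1; lra.
have := sqnorm_ge0 (x j); nra.
Qed.

Lemma sqnorm_scale_coord n (v x : 'cV[C]_n) k :
  sqnorm (v k 0 *: x) <= sqnorm v * sqnorm x.
Proof.
have coord_ge0 j : 0 <= (v j 0)^* * v j 0 by rewrite mulrC mul_conjC_ge0.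
have coordE j : (v j 0)^* * v j 0 = (complex.Re ((v j 0)^* * v j 0))%:C.
  by apply/conj_fixE; rewrite rmorphM /= conjCK mulrC.
rewrite /sqnorm /redot dotvZl dotvZr mulrA coordE Re_realM.
apply: ler_wpM2r; first exact: sqnorm_ge0.
rewrite dotvE raddf_sum (bigD1 k) //= lerDl; apply: sumr_ge0 => j _.
by have := coord_ge0 j; rewrite coordE lecR.
Qed.

Lemma opbound_exists n (A : 'M[C]_n) : exists2 s, 0 <= s & opbound A s.
Proof.
pose K := 2 ^+ size (index_enum 'I_n) * \sum_j sqnorm (col j A).
have K0 : 0 <= K.
  by apply: mulr_ge0; [apply: exprn_ge0 | apply: sumr_ge0 => j _; apply: sqnorm_ge0].
exists (Num.sqrt K); first exact: sqrtr_ge0.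
move=> v; rewrite sqr_sqrtr //.
have -> : A *m v = \sum_j v j 0 *: col j A.
  apply/matrixP=> i k; rewrite (ord1 k) !mxE summxE; apply: eq_bigr => j _.
  by rewrite !mxE mulrC.
apply: le_trans (sqnorm_sum _ _) _.
rewrite /K -mulrA ler_wpM2l ?exprn_ge0 // mulr_suml; apply: ler_sum => j _.
by rewrite mulrC; apply: sqnorm_scale_coord.
Qed.

Lemma vnorm_sqnorm n (v : 'cV[C]_n) : vnorm v = Num.sqrt (sqnorm v).
Proof.
rewrite /vnorm /sqnorm /redot dotvE raddf_sum; congr Num.sqrt.
by apply: eq_bigr => k _; case: (v k 0) => x y /=; ring.
Qed.

Lemma vnorm_eq1 n (v : 'cV[C]_n) : vnorm v = 1 -> sqnorm v = 1.
Proof. by move=> v1; rewrite -(sqr_sqrtr (sqnorm_ge0 v)) -vnorm_sqnorm v1 expr1n. Qed.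

Lemma opnorm_ub n (A : 'M[C]_n) :
  has_ubound [set vnorm (A *m v) | v in [set v : 'cV[C]_n | vnorm v = 1]]%classic.
Proof.
have [s s0 As] := opbound_exists A.
exists s => _ [u /= u1 <-]; rewrite vnorm_sqnorm -(ger0_norm s0) -sqrtr_sqr.
rewrite ler_sqrt ?exprn_ge0 //; apply: le_trans (As u) _.
by rewrite vnorm_eq1 // mulr1.
Qed.

Lemma opnorm_ge0 n (A : 'M[C]_n) : 0 <= opnorm A.
Proof.
pose E := [set vnorm (A *m v) | v in [set v : 'cV[C]_n | vnorm v = 1]]%classic.
rewrite /opnorm -/E.
have [-> | /set0P [e [w w1 _]]] := eqVneq E set0%classic; first by rewrite sup0.
have Ew : E (vnorm (A *m w)) by exists w.
by apply: le_trans (ub_le_sup (opnorm_ub A) Ew); rewrite vnorm_sqnorm sqrtr_ge0.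
Qed.

Lemma opnorm_opbound n (A : 'M[C]_n) : opbound A (opnorm A).
Proof.
move=> v; have [-> | vnz] := eqVneq v 0; first by rewrite mulmx0 /sqnorm redot0r mulr0.
have vp : 0 < sqnorm v by rewrite lt_def sqnorm_eq0 vnz sqnorm_ge0.
pose c := Num.sqrt (sqnorm v).
have cp : 0 < c by rewrite sqrtr_gt0.
have c2 : c ^+ 2 = sqnorm v by rewrite sqr_sqrtr // ltW.
pose w := (c^-1)%:C *: v.
have w1 : vnorm w = 1.
  by rewrite vnorm_sqnorm sqnormZ exprVn c2 mulVf ?gt_eqF // sqrtr1.
have := ub_le_sup (opnorm_ub A) (ex_intro2 _ _ w w1 erefl).
rewrite -/(opnorm A) vnorm_sqnorm -scalemxAr sqnormZ exprVn c2.
rewrite -(ler_sqr (sqrtr_ge0 _) (opnorm_ge0 A)) sqr_sqrtr; last first.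
  by rewrite mulr_ge0 ?invr_ge0 ?sqnorm_ge0.
by rewrite mulrC ler_pdivrMr.
Qed.

Lemma opnorm_dim0 (A : 'M[C]_0) : opnorm A = 0.
Proof.
rewrite /opnorm; set E := (X in sup X).
suff -> : E = set0%classic by rewrite sup0.
apply/seteqP; split=> // _ [v /= v1 _]; move: v1.
by rewrite /vnorm big_ord0 sqrtr0 => /eqP; rewrite eq_sym oner_eq0.
Qed.

Lemma numrad_leW n (A : 'M[C]_n) h h' : h <= h' -> numrad_le A h -> numrad_le A h'.
Proof. by move=> hh' Ah v; apply: le_trans (Ah v) _; rewrite ler_wpM2r ?sqnorm_ge0. Qed.

Lemma numrad_le_opbound n (A : 'M[C]_n) s : 0 <= s -> opbound A s -> numrad_le A s.
Proof.
move=> s0 As v; rewrite -[s]mul1r; apply: redot_le_mul => //.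
by rewrite expr1n mul1r.
Qed.

Lemma numrad_le_exists n (A : 'M[C]_n) : exists2 h, 0 <= h & numrad_le A h.
Proof. by have [s s0 As] := opbound_exists A; exists s => //; apply: numrad_le_opbound. Qed.

Lemma numrad_leZ n (A : 'M[C]_n) (t h : R) :
  numrad_le A h -> numrad_le (t%:C *: A) (`|t| * h).
Proof. by move=> Ah v; rewrite qformZ normrM -mulrA ler_wpM2l. Qed.

Lemma selfadjoint_opbound n (A : 'M[C]_n) h :
  selfadjoint A -> 0 <= h -> numrad_le A h -> opbound A h.
Proof.
move=> hA h0 Ah y; set z := A *m y.
have nz0 := sqnorm_ge0 z; have ny0 := sqnorm_ge0 y.
(* polarization, then the choice t = h^-1 *)
have polar t : 0 < t -> 4 * t * sqnorm z <= 2 * h * (t ^+ 2 * sqnorm z + sqnorm y).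
  move=> t0; pose x := t%:C *: z.
  have e : qform A (x + y) - qform A (x - y) = 4 * t * sqnorm z.
    rewrite !qform_selfadjointD // qform_oppv mulmxN redotNr /x redotZl -/z.
    by rewrite /sqnorm; ring.
  move: (Ah (x + y)) (Ah (x - y)); rewrite !ler_norml sqnormD sqnormB.
  rewrite /x sqnormZ redotZl => /andP [_ u1] /andP [l2 _]; lra.
have [h00 | hnz] := eqVneq h 0.
  by have := polar 1 ltr01; rewrite h00 expr0n !mul0r mulr0; lra.
have hp : 0 < h by rewrite lt_def hnz.
have hVp : 0 < h^-1 by rewrite invr_gt0.
have := polar h^-1 hVp; rewrite -(ler_pM2l hp).
have -> : h * (4 * h^-1 * sqnorm z) = 4 * sqnorm z by field.
have -> : h * (2 * h * (h^-1 ^+ 2 * sqnorm z + sqnorm y)) =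
  2 * sqnorm z + 2 * h ^+ 2 * sqnorm y by field.
lra.
Qed.

Lemma selfadjoint_numrad_le0 n (A : 'M[C]_n) : selfadjoint A -> numrad_le A 0 -> A = 0.
Proof.
move=> hA A0; apply/matrixP=> i j.
have : sqnorm (A *m delta_mx j 0) == 0.
  rewrite eq_le sqnorm_ge0 andbT.
  by have := selfadjoint_opbound hA (lexx 0) A0 (delta_mx j 0); rewrite expr0n mul0r.
by rewrite sqnorm_eq0 -colE => /eqP /matrixP /(_ i 0); rewrite !mxE.
Qed.

Lemma numrad_le_anticomm n (S Z : 'M[C]_n) (s h : R) :
  selfadjoint S -> selfadjoint Z -> 0 <= s -> 0 <= h -> opbound S s ->
  numrad_le Z h -> numrad_le (S *m Z + Z *m S) (2 * s * h).
Proof.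
move=> hS hZ s0 h0 Ss Zh v.
have -> : qform (S *m Z + Z *m S) v = 2 * redot (S *m v) (Z *m v).
  rewrite qformD /qform -!mulmxA redot_adjmx hS.
  by rewrite [redot v (Z *m _)]redot_adjmx hZ [redot (Z *m v) _]redotC; ring.
rewrite normrM ger0_norm // -!mulrA ler_pM2l // mulrA.
by apply: redot_le_mul => //; apply: selfadjoint_opbound.
Qed.

Lemma numrad_le_perturbation n (Z S T : 'M[C]_n) (s a b : R) :
  selfadjoint Z -> selfadjoint S -> 0 <= s -> 3 * s < a -> opbound S s ->
  (forall h, 0 <= h -> numrad_le Z h -> numrad_le T (h * s)) ->
  (forall v, a * qform Z v = qform (S *m Z + Z *m S) v + b * qform S v - qform T v) ->
  numrad_le Z (s * `|b| / (a - 3 * s)).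
Proof.
move=> hZ hS s0 s3a Ss Ts eqZ.
have ap : 0 < a by apply: le_lt_trans s3a; rewrite mulr_ge0.
pose H := [set h | 0 <= h /\ numrad_le Z h]%classic.
have H0 : (H !=set0)%classic by have [h h0 Zh] := numrad_le_exists Z; exists h.
(* The least bound h = inf H is a bound, and the relation improves it to
   s (3 h + |b|) / a; hence h <= s (3 h + |b|) / a. *)
pose h := inf H.
have h0 : 0 <= h by apply: lb_le_inf H0 _ => h' [].
have Zh : numrad_le Z h.
  move=> v; have [v0 | vnz] := eqVneq v 0.
    by rewrite v0 /qform mulmx0 redot0r normr0 mulr_ge0 ?sqnorm_ge0.
  have vp : 0 < sqnorm v by rewrite lt_def sqnorm_eq0 vnz sqnorm_ge0.
  rewrite -ler_pdivrMr //; apply: lb_le_inf H0 _ => h' [_ Zh'].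
  by rewrite ler_pdivrMr.
have Zstep : numrad_le Z (s * (3 * h + `|b|) / a).
  move=> v; have nv0 := sqnorm_ge0 v.
  have e1 := numrad_le_anticomm hS hZ s0 h0 Ss Zh v.
  have e2 := numrad_le_opbound s0 Ss v.
  have e3 := Ts h h0 Zh v.
  rewrite mulrAC ler_pdivlMr // mulrC -{1}(ger0_norm (ltW ap)) -normrM eqZ.
  apply: le_trans (ler_normB _ _) _; apply: le_trans (lerD (ler_normD _ _) e3) _.
  rewrite normrM; have := ler_wpM2l (normr_ge0 b) e2; lra.
have Hlb : has_lbound H by exists 0 => h' [].
have step0 : 0 <= s * (3 * h + `|b|) / a.
  by rewrite divr_ge0 ?(ltW ap) // mulr_ge0 // addr_ge0 ?mulr_ge0.
have := ge_inf Hlb (conj step0 Zstep); rewrite -/h => hle.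
apply: numrad_leW Zh; rewrite ler_pdivlMr ?subr_gt0 //.
move: hle; rewrite ler_pdivlMr //; lra.
Qed.
End Bounds.

Section Twirl.
Variables (R : realType) (gT : finGroupType) (n : nat) (U : gT -> 'M[R[i]]_n).
Local Notation C := R[i].

Definition twirl (X : 'M[C]_n) := \sum_(g : gT) adjmx (U g) *m X *m U g.

Definition invariantmx (Y : 'M[C]_n) := forall g, adjmx (U g) *m Y *m U g = Y.

Fact twirl_is_linear : linear twirl.
Proof.
move=> c X Y; rewrite /twirl scaler_sumr -big_split; apply: eq_bigr => g _.
by rewrite mulmxDr mulmxDl -scalemxAr -scalemxAl.
Qed.

HB.instance Definition _ :=
  GRing.isLinear.Build C 'M[C]_n 'M[C]_n _ twirl twirl_is_linear.

Lemma twirlD X Y : twirl (X + Y) = twirl X + twirl Y.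
Proof. exact: linearD. Qed.

Lemma twirlB X Y : twirl (X - Y) = twirl X - twirl Y.
Proof. exact: linearB. Qed.

Lemma twirlZ c X : twirl (c *: X) = c *: twirl X.
Proof. exact: linearZ. Qed.

Lemma twirl0 : twirl 0 = 0.
Proof. exact: linear0. Qed.

Lemma twirl_adjmx X : adjmx (twirl X) = twirl (adjmx X).
Proof.
rewrite /twirl raddf_sum /=; apply: eq_bigr => g _.
by rewrite !adjmxM adjmxK mulmxA.
Qed.

Lemma invariantmx_adjmx Y : invariantmx Y -> invariantmx (adjmx Y).
Proof. by move=> invY g; rewrite -{2}(invY g) !adjmxM adjmxK mulmxA. Qed.

Lemma invariantmx_twirlE Y : invariantmx Y -> twirl Y = #|gT|%:R *: Y.
Proof. by move=> invY; rewrite /twirl (eq_bigr (fun=> Y)) ?sumr_const ?scaler_nat. Qed.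

Lemma numrad_le_twirl_compress Q Z (h sig : R) :
  orth_projector Q -> 0 <= h -> numrad_le Z h ->
  (forall v, qform (twirl Q) v <= sig * sqnorm v) ->
  numrad_le (twirl (Q *m Z *m Q)) (h * sig).
Proof.
move=> [hQ QQ] h0 Zh Qsig v.
rewrite /twirl qform_sum; apply: le_trans (ler_norm_sum _ _ _) _.
have sqnormQ w : sqnorm (Q *m w) = qform Q w.
  by rewrite /qform /sqnorm redot_adjmx hQ mulmxA QQ redotC.
apply: le_trans (_ : \sum_g h * qform Q (U g *m v) <= _).
  apply: ler_sum => g _; rewrite qform_adjmx_conj -{1}hQ qform_adjmx_conj.
  by rewrite -sqnormQ; apply: Zh.
rewrite -mulr_sumr -mulrA ler_wpM2l //; apply: le_trans (Qsig v).
by rewrite /twirl qform_sum; apply: ler_sum => g _; rewrite qform_adjmx_conj.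
Qed.

Hypothesis UM : forall g h, U (g * h)%g = U g *m U h.

Lemma twirl_invariant X : invariantmx (twirl X).
Proof.
move=> h; rewrite /twirl mulmx_sumr mulmx_suml.
rewrite [RHS](reindex_inj (mulIg h)) /=; apply: eq_bigr => g _.
by rewrite UM adjmxM !mulmxA.
Qed.

Lemma twirl_invariantP Y : twirl Y = #|gT|%:R *: Y -> invariantmx Y.
Proof.
have G0 : #|gT|%:R != 0 :> C.
  by rewrite pnatr_eq0 -lt0n; apply/card_gt0P; exists 1%g.
move=> tY g; apply: (scalerI G0).
by rewrite scalemxAl scalemxAr -tY twirl_invariant.
Qed.

Hypothesis U_unitary : forall g, unitary (U g).

Lemma twirl_mulmx_invariant Q Y : invariantmx Y -> twirl (Q *m Y) = twirl Q *m Y.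
Proof.
move=> invY; rewrite /twirl mulmx_suml; apply: eq_bigr => g _.
have [_ UU] := U_unitary g.
by rewrite -{2}(invY g) !mulmxA -[_ *m U g *m adjmx (U g)]mulmxA UU mulmx1.
Qed.

Lemma twirl_invariant_mulmx Q Y : invariantmx Y -> twirl (Y *m Q) = Y *m twirl Q.
Proof.
move=> invY; rewrite /twirl mulmx_sumr; apply: eq_bigr => g _.
have [_ UU] := U_unitary g.
by rewrite -{2}(invY g) !mulmxA -[_ *m U g *m adjmx (U g)]mulmxA UU mulmx1.
Qed.

End Twirl.

Section TransitiveOrbit.
Variables (gT : finGroupType) (a : nat) (to : {action gT &-> 'I_a}).
Hypothesis to_trans : [transitive [set: gT], on [set: 'I_a] | to].

Lemma card_act_fiber (i0 i : 'I_a) :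
  #|[set g | to i0 g == i]| = #|[set g | to i0 g == i0]|.
Proof.
have [x _ ->] := atransP2 to_trans (finset.in_setT i0) (finset.in_setT i).
rewrite -(card_rcoset [set g | to i0 g == i0] x); apply: eq_card => g.
rewrite mem_rcoset !inE actM.
apply/eqP/eqP => [-> | h]; first by rewrite actK.
by rewrite -[in RHS]h actKV.
Qed.

Lemma sum_act_orbit (V : nmodType) (i0 : 'I_a) (F : 'I_a -> V) :
  \sum_(g : gT) F (to i0 g) = \sum_i F i *+ #|[set g | to i0 g == i0]|.
Proof.
rewrite (partition_big (to i0) predT) //=; apply: eq_bigr => i _.
rewrite (eq_bigr (fun=> F i)) => [|g /eqP -> //].
by rewrite sumr_const -(card_act_fiber i0 i); congr (_ *+ _); apply: eq_card => g; rewrite inE.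
Qed.

End TransitiveOrbit.

Lemma linear_inj_surj (F : fieldType) m n (f : {linear 'M[F]_(m, n) -> 'M[F]_(m, n)}) :
  (forall X, f X = 0 -> X = 0) -> forall B, exists X, f X = B.
Proof.
move=> f_inj B.
have unit_f : lin_mx f \in unitmx.
  rewrite -row_free_unit -kermx_eq0; apply/eqP/row_matrixP => i.
  rewrite row0; apply: (can_inj vec_mxK); rewrite linear0; apply: f_inj.
  by rewrite -mx_rV_lin -row_mul mulmx_ker row0 linear0.
exists (vec_mx (mxvec B *m invmx (lin_mx f))).
by rewrite -mx_rV_lin mulmxKV // mxvecK.
Qed.

Lemma socle_card_mult_gt0 (F : fieldType) (gT : finGroupType) (G : {group gT}) n
    (rG : mx_representation F G n) (sG : socleType rG) :
  (0 < n)%N -> (0 < #|sG|)%N && (0 < \max_(W : sG) socle_mult W)%N.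
Proof.
move=> n_gt0; have nz1 : (1%:M : 'M[F]_n) != 0 by rewrite -mxrank_eq0 mxrank1 -lt0n.
apply: (mxsimple_exists (mxmodule1 rG) nz1) => -[V simV _].
pose W : sG := PackSocle (component_socle sG simV).
apply/andP; split; first by apply/card_gt0P; exists W.
apply: leq_trans (leq_bigmax W); rewrite /socle_mult divn_gt0.
  by apply: mxrankS; apply: component_mx_id; apply: socle_simple.
by have [_ nzW _] := socle_simple W; rewrite lt0n mxrank_eq0.
Qed.

Section OrbitExclusion.
Variables (R : realType) (n a : nat) (P : 'I_a -> 'M[R[i]]_n).
Variables (gT : finGroupType) (to : {action gT &-> 'I_a}) (U : gT -> 'M[R[i]]_n).
Local Notation C := R[i].
Hypothesis P_proj : forall i, orth_projector (P i).
Hypothesis to_trans : [transitive [set: gT], on [set: 'I_a] | to].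
Hypothesis UM : forall g h, U (g * h)%g = U g *m U h.
Hypothesis U_unitary : forall g, unitary (U g).
Hypothesis P_cov : forall i g, P (to i g) = adjmx (U g) *m P i *m U g.
Variable i0 : 'I_a.

Local Notation S := (\sum_(i < a) P i).
Local Notation s := (opnorm S).
Let m := #|[set g | to i0 g == i0]|.
Let K := 1%:M - P i0.

Let m_gt0 : (0 < m)%N.
Proof. by apply/card_gt0P; exists 1%g; rewrite inE act1. Qed.

Let mR_neq0 : (m%:R : R) != 0.
Proof. by rewrite pnatr_eq0 -lt0n m_gt0. Qed.

Let mC_neq0 : (m%:R : C) != 0.
Proof. by rewrite pnatr_eq0 -lt0n m_gt0. Qed.

Let G_neq0 : (#|gT|%:R : C) != 0.
Proof. by rewrite pnatr_eq0 -lt0n; apply/card_gt0P; exists 1%g. Qed.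

Let S_selfadjoint : selfadjoint S.
Proof. by rewrite /selfadjoint raddf_sum; apply: eq_bigr => i _; case: (P_proj i). Qed.

Let K_selfadjoint : selfadjoint K.
Proof. by rewrite /selfadjoint raddfB /= adjmx1; case: (P_proj i0) => ->. Qed.

Lemma card_stab_orbit : #|gT| = (m * a)%N.
Proof.
have := sum_act_orbit to_trans i0 (fun=> 1%N).
by rewrite sum1_card sumr_const card_ord => ->; rewrite -mulrnA natn.
Qed.

Lemma twirl_proj_i0 : twirl U (P i0) = S *+ m.
Proof.
rewrite /twirl (eq_bigr (fun g => P (to i0 g))) => [|g _]; last by rewrite P_cov.
by rewrite sum_act_orbit // -sumrMnl.
Qed.

Definition compressed_twirl (Y : 'M[C]_n) :=
  ((m%:R : R)^-1)%:C *: twirl U (P i0 *m Y *m P i0).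

Definition Phi (Y : 'M[C]_n) := twirl U (K *m Y *m K).

Lemma PhiD X Y : Phi (X + Y) = Phi X + Phi Y.
Proof. by rewrite /Phi [K *m _]mulmxDr [_ *m K]mulmxDl twirlD. Qed.

Lemma PhiB X Y : Phi (X - Y) = Phi X - Phi Y.
Proof. by rewrite /Phi [K *m _]mulmxBr [_ *m K]mulmxBl twirlB. Qed.

Lemma PhiZ c X : Phi (c *: X) = c *: Phi X.
Proof. by rewrite /Phi -scalemxAr -scalemxAl twirlZ. Qed.

Lemma Phi_invariant Y : invariantmx U (Phi Y).
Proof. exact: twirl_invariant. Qed.

Lemma Phi_adjmx Y : adjmx (Phi Y) = Phi (adjmx Y).
Proof. by rewrite /Phi twirl_adjmx !adjmxM K_selfadjoint mulmxA. Qed.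

Lemma compressed_twirl1 : compressed_twirl 1%:M = S.
Proof.
case: (P_proj i0) => _ PP.
rewrite /compressed_twirl mulmx1 PP twirl_proj_i0 -scaler_nat natC scalerA.
by rewrite -rmorphM (mulVf mR_neq0) scale1r.
Qed.

Lemma compressed_twirl_affine (t : R) Y :
  compressed_twirl (t%:C *: Y - 1%:M) = t%:C *: compressed_twirl Y - S.
Proof.
rewrite -compressed_twirl1 /compressed_twirl mulmxBr mulmxBl -scalemxAr -scalemxAl.
by rewrite twirlB twirlZ scalerBr !scalerA mulrC.
Qed.

Lemma Phi_invariantE Y : invariantmx U Y ->
  Phi Y = m%:R *: (a%:R *: Y - (S *m Y + Y *m S) + compressed_twirl Y).
Proof.
move=> invY; rewrite /Phi /K.
have -> : (1%:M - P i0) *m Y *m (1%:M - P i0) =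
    Y - (P i0 *m Y + Y *m P i0) + P i0 *m Y *m P i0.
  by rewrite mulmxBl mul1mx !mulmxBr mulmx1 mulmxBl opprB addrA addrAC opprD addrA.
rewrite twirlD twirlB twirlD (invariantmx_twirlE invY).
rewrite twirl_mulmx_invariant // twirl_invariant_mulmx // twirl_proj_i0.
rewrite card_stab_orbit natrM -scalerA -[S *+ m]scaler_nat -scalemxAl -scalemxAr -scalerDr.
rewrite /compressed_twirl [RHS]scalerDr [in RHS]scalerBr [_ *: (_%:C *: _)]scalerA.
by rewrite natC -rmorphM (mulfV mR_neq0) scale1r.
Qed.

Lemma numrad_le_compressed_twirl Z h :
  0 <= h -> numrad_le Z h -> numrad_le (compressed_twirl Z) (h * s).
Proof.
move=> h0 Zh.
have Qsig v : qform (twirl U (P i0)) v <= (m%:R * s) * sqnorm v.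
  rewrite twirl_proj_i0 -scaler_nat qform_natZ -mulrA ler_wpM2l ?ler0n //.
  have := numrad_le_opbound (opnorm_ge0 S) (opnorm_opbound S) v.
  by rewrite ler_norml => /andP [].
have := numrad_leZ ((m%:R : R)^-1) (numrad_le_twirl_compress (P_proj i0) h0 Zh Qsig).
by rewrite ger0_norm ?invr_ge0 ?ler0n // mulrCA (mulKf mR_neq0).
Qed.

Hypothesis s_small : 4 * s < a%:R.

Let s3_lt_a : 3 * s < a%:R.
Proof. by apply: le_lt_trans s_small; rewrite ler_wpM2r ?opnorm_ge0 ?ler_nat. Qed.

Lemma Phi_inj_selfadjoint Y : selfadjoint Y -> invariantmx U Y -> Phi Y = 0 -> Y = 0.
Proof.
move=> hY invY; rewrite Phi_invariantE // => /eqP.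
rewrite scaler_eq0 (negbTE mC_neq0) /= => /eqP eqY.
have relY v : a%:R * qform Y v =
    qform (S *m Y + Y *m S) v + 0 * qform S v - qform (compressed_twirl Y) v.
  have := congr1 (fun M => qform M v) eqY.
  rewrite /= qformD qformB qform_natZ qform0.
  move: (qform Y v) (qform (S *m Y + Y *m S) v) (qform S v).
  by move: (qform (compressed_twirl Y) v) => c y x t; lra.
apply: selfadjoint_numrad_le0 => //.
have := numrad_le_perturbation hY S_selfadjoint (opnorm_ge0 S) s3_lt_a
  (opnorm_opbound S) (@numrad_le_compressed_twirl Y) relY.
by rewrite normr0 mulr0 mul0r.
Qed.

Lemma Phi_inj Y : invariantmx U Y -> Phi Y = 0 -> Y = 0.
Proof.
move=> invY PhiY.
have invYt := invariantmx_adjmx invY.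
have PhiYt : Phi (adjmx Y) = 0 by rewrite -Phi_adjmx PhiY raddf0.
have sum_adj0 : Y + adjmx Y = 0.
  apply: Phi_inj_selfadjoint; last by rewrite PhiD PhiY PhiYt addr0.
    by rewrite /selfadjoint raddfD /= adjmxK addrC.
  by move=> g; rewrite mulmxDr mulmxDl invY invYt.
have diff_adj0 : 'i *: (Y - adjmx Y) = 0.
  apply: Phi_inj_selfadjoint; last by rewrite PhiZ PhiB PhiY PhiYt subrr scaler0.
    by rewrite /selfadjoint adjmxZ raddfB /= adjmxK conjCi scaleNr -scalerN opprB.
  by move=> g; rewrite -scalemxAr -scalemxAl mulmxBr mulmxBl invY invYt.
move/eqP: diff_adj0; rewrite scaler_eq0 (negbTE (neq0Ci _)) /= subr_eq0 => /eqP YYt.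
by move/eqP: sum_adj0; rewrite -YYt -mulr2n -scaler_nat scaler_eq0 pnatr_eq0 => /eqP.
Qed.

(* Lam agrees with Phi on invariant matrices but is injective on all of 'M_n, so that
   surjectivity of injective linear maps yields solutions of Phi Y = m. *)
Definition Lam (Y : 'M[C]_n) := Phi Y - twirl U Y + #|gT|%:R *: Y.

Fact Lam_is_linear : linear Lam.
Proof.
move=> c X Y; rewrite /Lam PhiD PhiZ twirlD twirlZ scalerDr scalerA mulrC -scalerA.
rewrite [in RHS]scalerDr [in RHS]scalerBr opprD [c *: Phi X + _ + _]addrACA.
by rewrite [LHS]addrACA.
Qed.

HB.instance Definition _ := GRing.isLinear.Build C 'M[C]_n 'M[C]_n _ Lam Lam_is_linear.

Lemma LamB X Y : Lam (X - Y) = Lam X - Lam Y.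
Proof. exact: linearB. Qed.

Lemma twirl_Lam Y : twirl U (Lam Y) = #|gT|%:R *: Phi Y.
Proof.
rewrite /Lam twirlD twirlB twirlZ (invariantmx_twirlE (Phi_invariant Y)).
by rewrite (invariantmx_twirlE (twirl_invariant UM Y)) subrK.
Qed.

Lemma Lam_invariant Y : Lam Y = Phi Y -> invariantmx U Y.
Proof.
move=> LY; apply: (twirl_invariantP UM); apply/esym/eqP.
rewrite -subr_eq0 addrC; apply/eqP; apply: (addrI (Phi Y)).
by rewrite addr0 addrA.
Qed.

Lemma Lam_inj Y : Lam Y = 0 -> Y = 0.
Proof.
move=> LY; have PhiY : Phi Y = 0.
  by apply: (scalerI G_neq0); rewrite -twirl_Lam LY twirl0 scaler0.
have invY : invariantmx U Y by apply: Lam_invariant; rewrite LY PhiY.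
exact: Phi_inj invY PhiY.
Qed.

Lemma Lam_adjmx Y : adjmx (Lam Y) = Lam (adjmx Y).
Proof. by rewrite /Lam raddfD raddfB /= Phi_adjmx twirl_adjmx adjmxZ conjC_nat. Qed.

Lemma Phi_solution : exists Y, [/\ invariantmx U Y, selfadjoint Y & Phi Y = m%:R *: 1%:M].
Proof.
have inv1 : invariantmx U (m%:R *: 1%:M).
  by move=> g; rewrite -scalemxAr -scalemxAl mulmx1 (U_unitary g).1.
have [Y LY] := linear_inj_surj Lam_inj (m%:R *: 1%:M).
have PhiY : Phi Y = m%:R *: 1%:M.
  by apply: (scalerI G_neq0); rewrite -twirl_Lam LY invariantmx_twirlE.
exists Y; split=> //; first by apply: Lam_invariant; rewrite LY PhiY.
apply/eqP; rewrite -subr_eq0; apply/eqP; apply: Lam_inj.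
by rewrite LamB -Lam_adjmx LY adjmxZ adjmx1 conjC_nat subrr.
Qed.

Lemma Phi_solution_shift Y : Phi Y = m%:R *: 1%:M -> invariantmx U Y ->
  let Z := (a%:R : R)%:C *: Y - 1%:M in
  forall w, a%:R * qform Z w =
    qform (S *m Z + Z *m S) w + 1 * qform S w - qform (compressed_twirl Z) w.
Proof.
move=> + invY; rewrite Phi_invariantE // => /(scalerI mC_neq0) eqY Z w.
have := congr1 (fun M => qform M w) eqY.
rewrite /= qformD qformB qform_natZ qform1 [qform (_ + _) w]qformD => qY.
rewrite /Z compressed_twirl_affine mulmxBr mulmxBl mulmx1 mul1mx -scalemxAr -scalemxAl.
rewrite !(qformB, qformD, qformZ) qform1; move: qY; rewrite /compressed_twirl qformZ.
move: (qform Y w) (qform (S *m Y) w) (qform (Y *m S) w) (qform S w) (sqnorm w).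
by move: (qform (twirl U _) w) ((m%:R : R)^-1) (a%:R : R) => c k b y x1 x2 t nw; nra.
Qed.

Lemma Phi_solution_psd Y : invariantmx U Y -> selfadjoint Y ->
  Phi Y = m%:R *: 1%:M -> forall v, 0 <= qform Y v.
Proof.
move=> invY hY PhiY v.
have hZ : selfadjoint ((a%:R : R)%:C *: Y - 1%:M).
  by rewrite /selfadjoint raddfB /= adjmxZ conjC_real hY adjmx1.
have := numrad_le_perturbation hZ S_selfadjoint (opnorm_ge0 S) s3_lt_a
  (opnorm_opbound S) (@numrad_le_compressed_twirl _) (Phi_solution_shift PhiY invY) v.
rewrite normr1 mulr1 qformB qformZ qform1 ler_norml => /andP [lo _].
have s0 := opnorm_ge0 S; have nv0 := sqnorm_ge0 v.
have a_gt0 : 0 < a%:R :> R by apply: le_lt_trans s3_lt_a; rewrite mulr_ge0.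
have le1 : s / (a%:R - 3 * s) <= 1.
  by rewrite ler_pdivrMr ?subr_gt0 // mul1r; move: s_small; lra.
have := ler_piMl nv0 le1; move: lo.
move: (qform Y v) (sqnorm v) (s / _) => y nv r lo le.
have : 0 <= a%:R * y by lra.
by rewrite pmulr_rge0.
Qed.

Theorem orbit_exclusion :
  exists Rm : 'I_a -> 'M[C]_n, POVM Rm /\ (forall i, P i *m Rm i = 0).
Proof.
have [Y [invY hY PhiY]] := Phi_solution.
have Ypsd := Phi_solution_psd invY hY PhiY.
pose Rm i := ((m%:R : R)^-1)%:C *:
  \sum_(g | to i0 g == i) adjmx (U g) *m (K *m Y *m K) *m U g.
have Rm_sa i : selfadjoint (Rm i).
  rewrite /selfadjoint /Rm adjmxZ conjC_real raddf_sum /=; congr (_ *: _).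
  by apply: eq_bigr => g _; rewrite !adjmxM adjmxK K_selfadjoint hY !mulmxA.
exists Rm; split; [split=> [i|] | move=> i].
- split=> [|v]; first exact: Rm_sa.
  rewrite -mulmxA -/(dotv v _) dotv_selfadjoint // lecR.
  rewrite /Rm qformZ qform_sum mulr_ge0 ?invr_ge0 ?ler0n // sumr_ge0 // => g _.
  by rewrite qform_adjmx_conj -{1}K_selfadjoint qform_adjmx_conj Ypsd.
- rewrite -scaler_sumr.
  have -> : \sum_i \sum_(g | to i0 g == i) adjmx (U g) *m (K *m Y *m K) *m U g = Phi Y.
    by rewrite /Phi /twirl (partition_big (to i0) predT).
  by rewrite PhiY natC scalerA -rmorphM (mulVf mR_neq0) scale1r.
- rewrite /Rm -scalemxAr mulmx_sumr big1 ?scaler0 // => g /eqP <-.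
  case: (P_proj i0) => _ PP.
  have P0K : P i0 *m K = 0 by rewrite /K mulmxBr mulmx1 PP subrr.
  rewrite P_cov !mulmxA -[_ *m U g *m adjmx (U g)]mulmxA (U_unitary g).2 mulmx1.
  by rewrite -[_ *m P i0 *m K]mulmxA P0K mulmx0 !mul0mx.
Qed.
End OrbitExclusion.

Theorem proposition5 (R : realType) (n a : nat) (P : 'I_a -> 'M[R[i]]_n)
  (gT : finGroupType) (to : {action gT &-> 'I_a})
  (U : mx_representation R[i] [set: gT]%G n) (sG : socleType U) :
  (forall i, orth_projector (P i)) ->
  [transitive [set: gT], on [set: 'I_a] | to] ->
  (forall g, unitary (U g)) ->
  (forall (i : 'I_a) (g : gT), P (to i g) = adjmx (U g) *m P i *m U g) ->
  let L := #|sG| in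
  let M := (\max_(W : sG) socle_mult W)%N in
  ((16 * L ^ 6 * M ^ 9)%N%:R * opnorm (\sum_(i < a) P i) < (a%:R : R)) ->
  exists Rm : 'I_a -> 'M[R[i]]_n,
    POVM Rm /\ (forall i, P i *m Rm i = 0).
Proof.
move=> P_proj to_trans U_unitary P_cov L M hyp.
have UM g h : U (g * h)%g = U g *m U h by rewrite repr_mxM ?inE.
have s_small : 4 * opnorm (\sum_(i < a) P i) < a%:R.
  apply: le_lt_trans hyp; have [n0 | n_gt0] := posnP n.
    by move: n0 (\sum_(i < a) P i) => -> A; rewrite opnorm_dim0 !mulr0.
  have /andP [L_gt0 M_gt0] := socle_card_mult_gt0 sG n_gt0.
  rewrite ler_wpM2r ?opnorm_ge0 // ler_nat -mulnA (leq_trans _ (leq_pmulr _ _)) //.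
  by rewrite muln_gt0 !expn_gt0 /L /M L_gt0 M_gt0.
have a_gt0 : (0 < a)%N.
  by rewrite -(ltr0n R); apply: le_lt_trans s_small; rewrite mulr_ge0 ?opnorm_ge0.
exact: orbit_exclusion P_proj to_trans UM U_unitary P_cov (Ordinal a_gt0) s_small.
Qed.
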